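(* Let $c:\mathcal J\to\mathbb Q$ be a consistent map. Then $\Phi_c(\pi(r))=\Omega(r)$ for all $r\in\mathbb Q^\times$ (i.e., $\Phi_c$ extends $\Omega$) if and only if $c(\mathbb Q,p)=-1$ for every non-Archimedean place (prime) $p$ of $\mathbb Q$.
   Context: Let $\overline{\mathbb Q}$ be an algebraic closure of $\mathbb Q$, $A$ the ring of algebraic integers, $\mathcal S=\overline{\mathbb Q}^\times/A^\times$ (a $\mathbb Q$-vector space, written multiplicatively with scalar action $\alpha\mapsto\alpha^r$), and $\pi:\overline{\mathbb Q}^\times\to\mathcal S$ the canonical map. $\Omega:\mathbb Q^\times\to\mathbb Z$ is the unique group homomorphism with $\Omega(p)=1$ for every prime $p$ (and $\Omega(-1)=0$), which is well defined on $\pi(\mathbb Q^\times)$. For a number field $K$ and non-Archimedean place $v$ of $K$, $p_v$ is the prime below $v$, $K_v$ the completion, and $\|\cdot\|_v$ the extension to $K_v$ of the $p_v$-adic absolute value on $\mathbb Q_{p_v}$. Let $\mathcal H_K=\pi(K^\times)$, $\mathcal S_K=\{\alpha\in\mathcal S:\alpha^n\in\mathcal H_K\text{ for some }n\in\mathbb N\}$, and $\|\alpha\|_v=\|\alpha^n\|_v^{1/n}$ for $\alpha\in\mathcal S_K$ with $\alpha^n\in\mathcal H_K$. Let $\mathcal J=\{(K,v)\}$ be the set of pairs of a number field and a non-Archimedean place of it. A map $c:\mathcal J\to\mathbb Q$ is consistent if $c(K,v)=\sum_{w\mid v}c(L,w)$ for all number fields $K$, finite extensions $L/K$ and non-Archimedean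 places $v$ of $K$. For consistent $c$, $\Phi_c:\mathcal S\to\mathbb Q$ is $\Phi_c(\alpha)=\sum_{v}\frac{c(K,v)}{\log p_v}\log\|\alpha\|_v$ over non-Archimedean places of any number field $K$ with $\alpha\in\mathcal S_K$ (independent of $K$). *)

From HB Require Import structures.
From mathcomp Require Import all_boot all_order all_algebra.
From mathcomp Require Import algC.
From mathcomp Require Import all_classical all_reals.
From mathcomp Require Import exp.
Set Implicit Arguments. Unset Strict Implicit. Unset Printing Implicit Defensive.
Import Order.TTheory GRing.Theory Num.Theory.
Local Open Scope classical_set_scope.
Local Open Scope ring_scope.

(* We model the algebraic closure of Q by algC (MathComp's countable
   algebraically closed field of characteristic 0, which is algebraic over Q). *)

Definition Qset : set algC := [set x | exists q : rat, x = ratr q].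

Definition is_number_field (K : set algC) : Prop :=
  [/\ K 1,
      (forall x y, K x -> K y -> K (x - y)),
      (forall x y, K x -> K y -> K (x * y)),
      (forall x, K x -> x != 0 -> K x^-1) &
      exists (n : nat) (b : 'I_n -> algC),
        K = [set x | exists q : 'I_n -> rat, x = \sum_(i < n) ratr (q i) * b i]].

Definition padic_val (p : nat) (r : rat) : int :=
  (logn p `|numq r|%N)%:Z - (logn p `|denq r|%N)%:Z.

Definition padic_abs (R : realType) (p : nat) (r : rat) : R :=
  if r == 0 then 0 else (p%:R : R) ^ (- padic_val p r).

(* [is_place_over K w p]: w is (the restriction to K of) the normalised
   absolute value ||.||_v of a non-Archimedean place v of K lying above the
   prime p, i.e. an absolute value on K extending the p-adic absolute value
   of Q.  By convention w vanishes outside K, so that a place of K is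
   represented by a unique function algC -> R. *)
Definition is_place_over (R : realType) (K : set algC) (w : algC -> R)
    (p : nat) : Prop :=
  prime p /\
  (forall x, ~ K x -> w x = 0) /\
  (forall x, K x -> 0 <= w x) /\
  (forall x, K x -> (w x = 0 <-> x = 0)) /\
  (forall x y, K x -> K y -> w (x * y) = w x * w y) /\
  (forall x y, K x -> K y -> w (x + y) <= Num.max (w x) (w y)) /\
  (forall q : rat, w (ratr q) = padic_abs R p q).

Definition places (R : realType) (K : set algC) : set (algC -> R) :=
  [set w | exists p, is_place_over K w p].

Definition prime_below (R : realType) (K : set algC) (v : algC -> R) : nat :=
  xget 0%N [set p | is_place_over K v p].

Definition restrict (R : realType) (K : set algC) (w : algC -> R) : algC -> R :=
  fun x => if pselect (K x) then w x else 0.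

(* A map c : J -> Q, J = pairs (K, v) with K a number field and v a
   non-Archimedean place of K; c is only ever evaluated on such pairs. *)
Definition consistent (R : realType) (c : set algC -> (algC -> R) -> rat) : Prop :=
  forall (K L : set algC), is_number_field K -> is_number_field L -> K `<=` L ->
  forall v, @places R K v ->
    c K v = \sum_(w \in [set w | @places R L w /\ restrict K w = v]) c L w.

Definition PhiK (R : realType) (c : set algC -> (algC -> R) -> rat)
    (K : set algC) (a : algC) : R :=
  \sum_(v \in @places R K) (ratr (c K v) / ln ((prime_below K v)%:R : R) * ln (v a)).

Definition Qgen (a : algC) : set algC :=
  [set x | exists P : {poly rat}, x = (map_poly ratr P).[a]].

(* Phi_c o pi : algC^x -> R, computed in the number field K = Q(a)
   (pi(a) lies in H_{Q(a)} subset S_{Q(a)}). *)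
Definition Phi_pi (R : realType) (c : set algC -> (algC -> R) -> rat)
    (a : algC) : R :=
  PhiK c (Qgen a) a.

(* Omega : Q^x -> Z, the homomorphism with Omega(p) = 1, Omega(-1) = 0:
   the number of prime factors counted with multiplicity. *)
Definition bigomega (n : nat) : nat := \sum_(p <- primes n) logn p n.

Definition Omega (r : rat) : int :=
  (bigomega `|numq r|%N)%:Z - (bigomega `|denq r|%N)%:Z.

(* The non-Archimedean places of Q(r) = Q are the p-adic absolute values, one
   for each prime p, and log |r|_p = - v_p(r) log p.  Hence
   Phi_c(pi(r)) = - sum_p c(Q,p) v_p(r), while Omega(r) = sum_p v_p(r).  These
   agree for every r exactly when c(Q,p) = -1 for all p: test r = p for one
   direction and compare termwise for the other. *)
From HB Require Import structures.
From mathcomp Require Import all_boot all_order all_algebra.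
From mathcomp Require Import algC.
From mathcomp Require Import all_classical all_reals.
From mathcomp Require Import exp.
From mathcomp Require Import zify ring.
Set Implicit Arguments. Unset Strict Implicit. Unset Printing Implicit Defensive.
Import Order.TTheory GRing.Theory Num.Theory.
Local Open Scope classical_set_scope.
Local Open Scope ring_scope.

Lemma padic_val_frac p (n d : int) : n != 0 -> d != 0 ->
  padic_val p (n%:~R / d%:~R) = (logn p `|n|)%:Z - (logn p `|d|)%:Z.
Proof.
move=> n0 d0; set q : rat := n%:~R / d%:~R.
have q0 : q != 0 by rewrite mulf_neq0 ?invr_eq0 ?intr_eq0.
have cross : (`|numq q| * `|d| = `|n| * `|denq q|)%N.
  rewrite -!abszM; congr `|_|%N; apply: (@intr_inj rat).
  by rewrite !intrM numqE /q; field; rewrite intr_eq0.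
have := congr1 (logn p) cross.
rewrite !lognM ?absz_gt0 ?numq_eq0 ?denq_neq0 // /padic_val; lia.
Qed.

Lemma padic_valM p q1 q2 : q1 != 0 -> q2 != 0 ->
  padic_val p (q1 * q2) = padic_val p q1 + padic_val p q2.
Proof.
move=> q10 q20.
have -> : q1 * q2 = (numq q1 * numq q2)%:~R / (denq q1 * denq q2)%:~R.
  rewrite -{1}(divq_num_den q1) -{1}(divq_num_den q2) !intrM.
  by field; rewrite !intr_eq0 !denq_neq0.
rewrite padic_val_frac ?mulf_neq0 ?numq_eq0 ?denq_neq0 // !abszM.
rewrite !lognM ?absz_gt0 ?numq_eq0 ?denq_neq0 // /padic_val; lia.
Qed.

Lemma logn_absz_addr p (a b : int) k : prime p -> a + b != 0 ->
  (k <= logn p `|a|)%N -> (k <= logn p `|b|)%N -> (k <= logn p `|(a + b)%R|)%N.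
Proof.
move=> p_pr ab0 ka kb.
have pk_dvd (x : int) : (k <= logn p `|x|)%N -> ((p ^ k)%N%:Z %| x)%Z.
  by move=> kx; rewrite dvdzE /= (dvdn_trans _ (pfactor_dvdnn p _)) ?dvdn_exp2l.
have := rpredD (pk_dvd _ ka) (pk_dvd _ kb).
by rewrite dvdzE /= pfactor_dvdn ?absz_gt0.
Qed.

Lemma padic_val_add p q1 q2 : prime p -> q1 != 0 -> q2 != 0 -> q1 + q2 != 0 ->
  Num.min (padic_val p q1) (padic_val p q2) <= padic_val p (q1 + q2).
Proof.
move=> p_pr q10 q20 q0.
set a := numq q1 * denq q2; set b := numq q2 * denq q1.
set D := denq q1 * denq q2.
have a_neq0 : a != 0 by rewrite mulf_neq0 ?denq_neq0 ?numq_eq0.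
have b_neq0 : b != 0 by rewrite mulf_neq0 ?denq_neq0 ?numq_eq0.
have D_neq0 : D != 0 by rewrite mulf_neq0 ?denq_neq0.
have q1E : q1 = a%:~R / D%:~R.
  by rewrite /a /D -{1}(divq_num_den q1) !intrM; field; rewrite !intr_eq0 !denq_neq0.
have q2E : q2 = b%:~R / D%:~R.
  by rewrite /b /D -{1}(divq_num_den q2) !intrM; field; rewrite !intr_eq0 !denq_neq0.
have qE : q1 + q2 = (a + b)%:~R / D%:~R by rewrite q1E q2E intrD mulrDl.
have ab0 : a + b != 0 by apply: contra q0; rewrite qE => /eqP ->; rewrite mul0r.
rewrite qE {1}q1E q2E !padic_val_frac // ge_min !lerD2r !lez_nat.
by case: (leqP (logn p `|a|) (logn p `|b|)) => [ab|/ltnW ba];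
  apply/orP; [left|right]; apply: logn_absz_addr.
Qed.

Lemma ln_exprz (R : realType) (x : R) (z : int) :
  0 < x -> ln (x ^ z) = z%:~R * ln x.
Proof.
move=> x_gt0; case: z => n; first by rewrite lnXn // mulr_natl.
by rewrite NegzE -invr_expz lnV ?posrE ?exprn_gt0 // lnXn // mulNr mulr_natl.
Qed.

Section PadicAbs.
Variables (R : realType) (p : nat).
Hypothesis p_pr : prime p.

Let p_gt0 : 0 < (p%:R : R).
Proof. by rewrite ltr0n prime_gt0. Qed.

Lemma padic_abs0 : padic_abs R p 0 = 0.
Proof. by rewrite /padic_abs eqxx. Qed.

Lemma padic_absE q : q != 0 -> padic_abs R p q = (p%:R : R) ^ (- padic_val p q).
Proof. by move=> q0; rewrite /padic_abs (negbTE q0). Qed.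

Lemma padic_abs_ge0 q : 0 <= padic_abs R p q.
Proof.
have [->|q0] := eqVneq q 0; first by rewrite padic_abs0.
by rewrite padic_absE // exprz_ge0 // ltW.
Qed.

Lemma padic_abs_eq0 q : (padic_abs R p q = 0) <-> (q = 0).
Proof.
split=> [|->]; last exact: padic_abs0.
have [//|q0] := eqVneq q 0.
by rewrite padic_absE // => /eqP; rewrite gt_eqF // exprz_gt0.
Qed.

Lemma padic_absM q1 q2 :
  padic_abs R p (q1 * q2) = padic_abs R p q1 * padic_abs R p q2.
Proof.
have [->|q10] := eqVneq q1 0; first by rewrite mul0r padic_abs0 mul0r.
have [->|q20] := eqVneq q2 0; first by rewrite mulr0 padic_abs0 mulr0.
rewrite !padic_absE ?mulf_neq0 // padic_valM // opprD exprzDr //.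
by rewrite unitfE gt_eqF.
Qed.

Lemma padic_abs_ultra q1 q2 :
  padic_abs R p (q1 + q2) <= Num.max (padic_abs R p q1) (padic_abs R p q2).
Proof.
have [->|q10] := eqVneq q1 0; first by rewrite add0r padic_abs0 le_max lexx orbT.
have [->|q20] := eqVneq q2 0; first by rewrite addr0 padic_abs0 le_max lexx.
have [->|q0] := eqVneq (q1 + q2) 0; first by rewrite padic_abs0 le_max padic_abs_ge0.
have p_ge1 : 1 <= (p%:R : R) by rewrite ler1n prime_gt0.
have := padic_val_add p_pr q10 q20 q0; rewrite !padic_absE // le_max ge_min.
by case/orP=> val_le; apply/orP; [left|right]; rewrite ler_weXz2l // lerN2.
Qed.

Lemma ln_padic_abs q : q != 0 ->
  ln (padic_abs R p q) = - (padic_val p q)%:~R * ln (p%:R : R).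
Proof. by move=> q0; rewrite padic_absE // ln_exprz // intrN. Qed.

End PadicAbs.

Lemma padic_val_prime p' p : prime p -> padic_val p' p%:Q = (p' == p).
Proof.
by move=> p_pr; rewrite /padic_val numq_int denq_int /= logn1 subr0 logn_prime.
Qed.

Lemma Qgen_ratr r : Qgen (ratr r) = Qset.
Proof.
apply/seteqP; split=> x; first by move=> [P ->]; exists P.[r]; rewrite horner_map.
by move=> [q ->]; exists q%:P; rewrite map_polyC hornerC.
Qed.

Section PlacesOfQ.
Variable R : realType.

Definition padic_place (p : nat) : algC -> R :=
  fun x => if pselect (Qset x) then padic_abs R p (getCrat x) else 0.

Lemma padic_place_ratr p q : padic_place p (ratr q) = padic_abs R p q.
Proof.
rewrite /padic_place; case: pselect => [Qq|nQ]; first by rewrite ratCK.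
by case: nQ; exists q.
Qed.

Lemma padic_place_over p : prime p -> is_place_over Qset (padic_place p) p.
Proof.
move=> p_pr; split=> //; split; [|split; [|split; [|split; [|split]]]].
- by move=> x nQ; rewrite /padic_place; case: pselect.
- by move=> _ [q ->]; rewrite padic_place_ratr padic_abs_ge0.
- move=> _ [q ->]; rewrite padic_place_ratr padic_abs_eq0 //.
  by split=> [->|/eqP]; [rewrite rmorph0 | rewrite fmorph_eq0 => /eqP].
- by move=> _ _ [a ->] [b ->]; rewrite -rmorphM !padic_place_ratr padic_absM.
- by move=> _ _ [a ->] [b ->]; rewrite -rmorphD !padic_place_ratr padic_abs_ultra.
- exact: padic_place_ratr.
Qed.

Lemma place_over_QE (w : algC -> R) p :
  is_place_over Qset w p -> w = padic_place p.
Proof.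
move=> [_ [w_out [_ [_ [_ [_ w_ratr]]]]]]; apply: funext => x.
have [[q ->]|nQ] := pselect (Qset x); first by rewrite padic_place_ratr w_ratr.
by rewrite w_out // /padic_place; case: pselect.
Qed.

Lemma padic_place_inj : set_inj [set p | prime p] padic_place.
Proof.
move=> p p'; rewrite !inE => p_pr p'_pr /(congr1 (fun w => w (ratr p%:Q))).
rewrite !padic_place_ratr !padic_absE ?intr_eq0 -?lt0n ?prime_gt0 //.
rewrite !padic_val_prime // eqxx; have [//|_] := eqVneq p' p.
rewrite expr0z -invr_expz expr1z => /eqP; rewrite invr_eq1 pnatr_eq1 => /eqP p1.
by move: (prime_gt1 p_pr); rewrite p1.
Qed.

Lemma prime_below_padic_place p : prime p -> prime_below Qset (padic_place p) = p.
Proof.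
move=> p_pr; apply: xget_unique; first exact: padic_place_over.
move=> p' p'_over; have [p'_pr _] := p'_over.
by apply: padic_place_inj; rewrite ?inE // (place_over_QE p'_over).
Qed.

Lemma places_QE : @places R Qset = padic_place @` [set p | prime p].
Proof.
apply/seteqP; split=> [w [p w_p]|_ [p p_pr <-]]; last first.
  by exists p; exact: padic_place_over.
by exists p; [exact: w_p.1 | rewrite (place_over_QE w_p)].
Qed.

End PlacesOfQ.

Definition rat_primes (r : rat) : seq nat := primes (`|numq r| * `|denq r|).

Lemma padic_val_notin_rat_primes p r : r != 0 -> p \notin rat_primes r ->
  padic_val p r = 0.
Proof.
move=> r0; rewrite -logn_gt0 -leqNgt leqn0 lognM ?absz_gt0 ?numq_eq0 ?denq_neq0 //.
by rewrite addn_eq0 /padic_val => /andP[/eqP-> /eqP->].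
Qed.

Lemma bigomega_sum_logn n (s : seq nat) :
  (0 < n)%N -> uniq s -> {subset primes n <= s} ->
  bigomega n = (\sum_(p <- s) logn p n)%N.
Proof.
move=> n_gt0 s_uniq s_primes; rewrite /bigomega [RHS](bigID (mem (primes n))) /=.
rewrite [X in (_ + X)%N]big1 ?addn0 => [|p]; last by rewrite -logn_gt0 lt0n negbK => /eqP.
rewrite -[RHS]big_filter; apply: perm_big; apply: uniq_perm.
- exact: primes_uniq.
- exact: filter_uniq.
- by move=> p; rewrite mem_filter andb_idr // => /s_primes.
Qed.

Lemma Omega_sum_padic_val r : r != 0 ->
  Omega r = \sum_(p <- rat_primes r) padic_val p r.
Proof.
move=> r0; have n_gt0 : (0 < `|numq r|)%N by rewrite absz_gt0 numq_eq0.
have d_gt0 : (0 < `|denq r|)%N by rewrite absz_gt0 denq_neq0.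
rewrite /Omega /padic_val sumrB -!(big_morph Posz PoszD (erefl 0%:Z)).
rewrite -!bigomega_sum_logn ?primes_uniq // => p.
  by rewrite !mem_primes muln_gt0 n_gt0 d_gt0 => /andP[-> /dvdn_mull ->].
by rewrite !mem_primes muln_gt0 n_gt0 d_gt0 => /andP[-> /dvdn_mulr ->].
Qed.

Lemma Phi_pi_ratr (R : realType) (c : set algC -> (algC -> R) -> rat) r : r != 0 ->
  Phi_pi c (ratr r) =
  - \sum_(p <- rat_primes r) ratr (c Qset (padic_place R p)) * (padic_val p r)%:~R.
Proof.
move=> r0; rewrite /Phi_pi Qgen_ratr /PhiK places_QE.
rewrite fsbig_image; last exact: padic_place_inj.
have primes_r : [set` rat_primes r] `<=` [set p | prime p].
  by move=> p; rewrite /= mem_primes => /andP[].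
rewrite -sumrN [RHS]fsbig_seq ?primes_uniq //.
rewrite [RHS](fsbig_widen _ [set p | prime p]) //.
  apply: eq_fsbigr => p; rewrite inE => p_pr.
  rewrite prime_below_padic_place // padic_place_ratr ln_padic_abs //.
  by field; rewrite gt_eqF // ln_gt0 // ltr1n prime_gt1.
move=> p [/= p_pr /negP p_r]; rewrite /= padic_val_notin_rat_primes //.
by rewrite mulr0 oppr0.
Qed.

Lemma rat_primes_prime p : prime p -> rat_primes p%:Q = [:: p].
Proof. by move=> p_pr; rewrite /rat_primes numq_int denq_int muln1 primes_prime. Qed.

Theorem theorem2p1 (R : realType) (c : set algC -> (algC -> R) -> rat) :
  consistent c ->
  ((forall r : rat, r != 0 -> Phi_pi c (ratr r) = (Omega r)%:~R) <->
   (forall v : algC -> R, @places R Qset v -> c Qset v = -1)).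
Proof.
(* Consistency only makes [Phi_c] independent of the field it is evaluated
   in; on [pi(Q^x)] it is computed directly in [Q(r) = Q]. *)
move=> _; split=> [Phi_Omega v [p v_p] | c_eq r r0].
  have p_pr := v_p.1; have p0 : p%:Q != 0 by rewrite pnatr_eq0 -lt0n prime_gt0.
  move: (Phi_Omega _ p0); rewrite Phi_pi_ratr // Omega_sum_padic_val //.
  rewrite rat_primes_prime // !big_seq1 padic_val_prime // eqxx mulr1.
  rewrite (place_over_QE v_p) => /eqP; rewrite eqr_oppLR -(rmorph1 (ratr : rat -> R)).
  by rewrite -rmorphN => /eqP /fmorph_inj.
rewrite Phi_pi_ratr // Omega_sum_padic_val // rmorph_sum -sumrN.
apply: eq_big_seq => p; rewrite mem_primes => /andP[p_pr _].
by rewrite c_eq ?rmorphN1 ?mulN1r ?opprK //; exists p; exact: padic_place_over.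
Qed.
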